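(* Suppose that $\mathcal{H}$ is a flat group of automorphisms of a totally disconnected, locally compact group $G$. Then $\mathcal{H}=\mathcal{H}_{FC_d}$, i.e. every element of $\mathcal{H}$ has bounded conjugacy class $\varphi^{\mathcal{H}}$.
   Context: Automorphisms are continuous with continuous inverse. $\mathcal{B}(G)$ is the set of compact, open subgroups of $G$ with metric $d(V,W)=\log\bigl(|V:V\cap W|\cdot|W:W\cap V|\bigr)$. A set $B$ of automorphisms is bounded if $B.V=\{\beta(V):\beta\in B\}$ has bounded diameter for some (equivalently every) $V\in\mathcal{B}(G)$. $\varphi^{\mathcal{H}}=\{\psi\varphi\psi^{-1}:\psi\in\mathcal{H}\}$ and $\mathcal{H}_{FC_d}=\{\varphi\in\mathcal{H}:\varphi^{\mathcal{H}}\text{ bounded}\}$. The scale of $\varphi$ is $s_G(\varphi)=\min\{|\varphi(V):\varphi(V)\cap V|:V\in\mathcal{B}(G)\}$; $\mathcal{H}$ is flat if there is $O\in\mathcal{B}(G)$ with $|\varphi(O):\varphi(O)\cap O|=s_G(\varphi)$ for all $\varphi\in\mathcal{H}$. *)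

From Stdlib Require Import Reals.
From mathcomp Require Import all_boot.
From mathcomp Require Import all_classical all_reals all_analysis.

Set Implicit Arguments.
Unset Strict Implicit.
Unset Printing Implicit Defensive.

Local Open Scope classical_set_scope.

Section TDLC.
Variables (G : topologicalType) (mul : G -> G -> G) (inv : G -> G) (one : G).

Definition is_group : Prop :=
  [/\ forall x y z, mul x (mul y z) = mul (mul x y) z,
      forall x, mul one x = x, forall x, mul x one = x,
      forall x, mul (inv x) x = one & forall x, mul x (inv x) = one].

Definition is_topological_group : Prop :=
  [/\ is_group, continuous (fun p : G * G => mul p.1 p.2) & continuous inv].

Definition is_tdlc_group : Prop :=
  [/\ is_topological_group, hausdorff_space G,
      locally_compact [set: G] & totally_disconnected [set: G]].

Definition is_subgroup (V : set G) : Prop :=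
  [/\ V one, forall x y, V x -> V y -> V (mul x y) & forall x, V x -> V (inv x)].

Definition compact_open_subgroup (V : set G) : Prop :=
  [/\ is_subgroup V, compact V & open V].

(* index A B n : the subgroup B <= A has exactly n left cosets b*B in A *)
Definition index (A B : set G) (n : nat) : Prop :=
  exists f : 'I_n -> G,
    [/\ forall i, A (f i),
        forall i j, B (mul (inv (f i)) (f j)) -> i = j &
        forall a, A a -> exists i, B (mul (inv (f i)) a)].

Definition dist_eq (V W : set G) (r : R) : Prop :=
  exists m n, [/\ index V (V `&` W) m, index W (W `&` V) n &
                  r = Rpower.ln (INR (m * n)%N)].

Definition is_automorphism (phi : G -> G) : Prop :=
  [/\ forall x y, phi (mul x y) = mul (phi x) (phi y),
      continuous phi &
      exists psi : G -> G, [/\ cancel phi psi, cancel psi phi & continuous psi]].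

Definition bounded_auts (B : set (G -> G)) : Prop :=
  exists V, compact_open_subgroup V /\
    exists M : R, forall b b' r, B b -> B b' -> dist_eq (b @` V) (b' @` V) r ->
      Rle r M.

Definition is_group_of_automorphisms (H : set (G -> G)) : Prop :=
  [/\ forall phi, H phi -> is_automorphism phi,
      H id,
      forall phi psi, H phi -> H psi -> H (phi \o psi) &
      forall phi, H phi -> exists psi, [/\ H psi, cancel phi psi & cancel psi phi]].

Definition conj_class (H : set (G -> G)) (phi : G -> G) : set (G -> G) :=
  [set chi | exists psi psi' : G -> G,
     [/\ H psi, cancel psi psi', cancel psi' psi & chi = psi \o phi \o psi']].

Definition FCd (H : set (G -> G)) : set (G -> G) :=
  [set phi | H phi /\ bounded_auts (conj_class H phi)].

Definition is_scale (phi : G -> G) (n : nat) : Prop :=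
  (exists V, compact_open_subgroup V /\ index (phi @` V) (phi @` V `&` V) n) /\
  forall V m, compact_open_subgroup V -> index (phi @` V) (phi @` V `&` V) m ->
    (n <= m)%N.

Definition flat (H : set (G -> G)) : Prop :=
  exists O, compact_open_subgroup O /\
    forall phi, H phi -> exists n, index (phi @` O) (phi @` O `&` O) n /\ is_scale phi n.

End TDLC.

From Pilot Require Import Defs.
From Stdlib Require Import Reals Lra.
From mathcomp Require Import all_boot.
From mathcomp Require Import all_classical all_reals all_analysis.
From mathcomp Require Import zify.

(* Fix O as in the definition of flatness.  For a conjugate chi = psi phi psi^-1,
   the index |chi(U) : chi(U) \cap U| at U = psi(O) equals |phi(O) : phi(O) \cap O|
   =: n1; since the scale of chi is attained at O, |chi(O) : chi(O) \cap O| <= n1.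
   Likewise chi^-1(O) is covered by n2 = |phi^-1(O) : phi^-1(O) \cap O| cosets of
   O, so O is covered by n2 cosets of chi(O).  Hence for two conjugates chi, chi',
   chi(O) is covered by n1 cosets of O, each covered by n2 cosets of chi'(O), and
   the distance between chi(O) and chi'(O) is at most log((n1 n2)^2). *)

Set Implicit Arguments.
Unset Strict Implicit.
Local Open Scope classical_set_scope.

Lemma ln_INR_le (k K : nat) : (k <= K)%N ->
  Rle (Rpower.ln (INR k)) (Rpower.ln (INR K)).
Proof.
have ln0 : Rpower.ln (INR 0) = R0.
  rewrite /= /Rpower.ln; case: Rlt_dec => // h.
  by case: (Rlt_irrefl R0).
case: K => [|K]; first by rewrite leqn0 => /eqP ->; exact: Rle_refl.
case: k => [_|k].
  (* Stdlib's [ln] is [0] on nonpositive reals *)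
  rewrite ln0; have -> : R0 = Rpower.ln R1 by rewrite Rpower.ln_1.
  have [->|ne1] := Req_dec (INR K.+1) R1; first exact: Rle_refl.
  apply: Rlt_le; apply: ln_increasing; first exact: Rlt_0_1.
  by rewrite S_INR in ne1 *; have := pos_INR K; lra.
rewrite leq_eqVlt => /orP [/eqP ->|lt]; first exact: Rle_refl.
apply: Rlt_le; apply: ln_increasing.
  by apply: lt_0_INR; apply/ltP.
by apply: lt_INR; apply/ltP.
Qed.

Section GroupFacts.
Variables (G : topologicalType) (mul : G -> G -> G) (inv : G -> G) (one : G).
Hypothesis Hg : is_group mul inv one.

Lemma mulgI a x y : mul a x = mul a y -> x = y.
Proof.
case: Hg => mA m1 _ mV _ e.
by rewrite -(m1 x) -(mV a) -mA e mA mV m1.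
Qed.

Lemma invg_unique x y : mul x y = one -> inv x = y.
Proof.
case: Hg => mA m1 m1r mV _ e.
by rewrite -(m1r (inv x)) -e mA mV m1.
Qed.

Lemma invgM x y : inv (mul x y) = mul (inv y) (inv x).
Proof.
case: Hg => mA m1 _ _ mVr; apply: invg_unique.
by rewrite -mA (mA y) mVr m1 mVr.
Qed.

Lemma invgK x : inv (inv x) = x.
Proof. by case: Hg => _ _ _ mV _; apply: invg_unique; rewrite mV. Qed.

Definition group_hom (f : G -> G) := forall x y, f (mul x y) = mul (f x) (f y).

Lemma group_hom1 f : group_hom f -> f one = one.
Proof.
case: Hg => _ m1 m1r _ _ hf.
by apply: (@mulgI (f one)); rewrite -hf m1 m1r.
Qed.

Lemma group_homV f : group_hom f -> forall x, f (inv x) = inv (f x).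
Proof.
case: Hg => _ _ _ _ mVr hf x; symmetry; apply: invg_unique.
by rewrite -hf mVr (group_hom1 hf).
Qed.

Lemma group_hom_comp f g : group_hom f -> group_hom g -> group_hom (f \o g).
Proof. by move=> hf hg x y /=; rewrite hg hf. Qed.

Lemma subgroup_image f V : group_hom f ->
  is_subgroup mul inv one V -> is_subgroup mul inv one (f @` V).
Proof.
move=> hf [V1 VM VV]; split.
- by exists one => //; rewrite (group_hom1 hf).
- by move=> _ _ [x Vx <-] [y Vy <-]; exists (mul x y); [exact: VM | rewrite hf].
- by move=> _ [x Vx <-]; exists (inv x); [exact: VV | rewrite (group_homV hf)].
Qed.

Lemma compact_open_subgroup_image f V : is_automorphism mul f ->
  compact_open_subgroup mul inv one V -> compact_open_subgroup mul inv one (f @` V).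
Proof.
move=> [hf cf [g [fK gK cg]]] [sV cV oV]; split.
- exact: subgroup_image.
- by apply: continuous_compact => //; exact: continuous_subspaceT.
- have -> : f @` V = g @^-1` V.
    apply/seteqP; split => [_ [y Vy <-]|x Vx] /=; first by rewrite fK.
    by exists (g x) => //; rewrite gK.
  by apply: open_comp => // x _; exact: cg.
Qed.

Lemma index_image f A B n : group_hom f -> injective f ->
  Defs.index mul inv A B n -> Defs.index mul inv (f @` A) (f @` B) n.
Proof.
move=> hf f_inj [g [gA g_inj gcov]]; exists (f \o g); split.
- by move=> i; exists (g i).
- move=> i j [b Bb e]; apply: g_inj.
  suff -> : mul (inv (g i)) (g j) = b by [].
  by apply: f_inj; rewrite e hf (group_homV hf).
- move=> _ [a Aa <-]; have [i Bi] := gcov a Aa; exists i.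
  by exists (mul (inv (g i)) a); rewrite // hf (group_homV hf).
Qed.

(* [A] is contained in [K] left cosets of [C]; unlike [index], neither
   distinctness of the cosets nor [C <= A] is required. *)
Definition coset_cover (A C : set G) (K : nat) :=
  exists g : nat -> G, forall a, A a -> exists2 k, (k < K)%N & C (mul (inv (g k)) a).

Lemma coset_cover_le A C K K' :
  coset_cover A C K -> (K <= K')%N -> coset_cover A C K'.
Proof.
move=> [g gcov] le; exists g => a /gcov[k lk Ck].
by exists k => //; apply: leq_trans le.
Qed.

Lemma coset_cover_trans A B C K1 K2 :
  coset_cover A B K1 -> coset_cover B C K2 -> coset_cover A C (K1 * K2).
Proof.
case: Hg => mA _ _ _ _ [g1 cov1] [g2 cov2].
exists (fun k => mul (g1 (k %/ K2)) (g2 (k %% K2))) => a /cov1[k1 lk1 /cov2[k2 lk2 Ck2]].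
have K2_gt0 : (0 < K2)%N by apply: leq_ltn_trans lk2.
exists (k1 * K2 + k2).
  have : (k1.+1 * K2 <= K1 * K2)%N by rewrite leq_mul2r lk1 orbT.
  rewrite mulSn; lia.
rewrite divnMDl // divn_small // addn0 modnMDl modn_small //.
by rewrite invgM -mA.
Qed.

Lemma index_coset_cover A C n :
  Defs.index mul inv A (A `&` C) n -> coset_cover A C n.
Proof.
move=> [f [_ _ fcov]].
exists (fun k => if insub k is Some i then f i else one) => a /fcov[i [_ Ci]].
by exists (val i); [exact: ltn_ord | rewrite valK].
Qed.

Lemma index_le_coset_cover A C m K :
  is_subgroup mul inv one A -> is_subgroup mul inv one C ->
  Defs.index mul inv A (A `&` C) m -> coset_cover A C K -> (m <= K)%N.
Proof.
case: Hg => mA m1 _ _ mVr [_ AM AV] [_ CM CV] [f [fA f_inj _]] [g gcov].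
have /boolp.choice[h hP] : forall i : 'I_m, exists k : 'I_K, C (mul (inv (g k)) (f i)).
  by move=> i; have [k lk Ck] := gcov _ (fA i); exists (Ordinal lk).
suff /leq_card : injective h by rewrite !card_ord.
move=> i j hij; apply: f_inj; split; first by apply: AM; [apply: AV|].
have := CM _ _ (CV _ (hP i)) (hP j).
by rewrite hij invgM invgK -mA (mA (g (h j))) mVr m1.
Qed.

Lemma coset_cover_preimage (f g : G -> G) A C K :
  group_hom f -> (forall a, f (g a) = a) ->
  coset_cover (g @` A) C K -> coset_cover A (f @` C) K.
Proof.
move=> hf gK [c ccov]; exists (f \o c) => a Aa.
have [k lk Ck] := ccov (g a) (ex_intro2 _ _ a Aa erefl).
exists k => //; exists (mul (inv (c k)) (g a)) => //.
by rewrite hf (group_homV hf) gK.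
Qed.

End GroupFacts.

Lemma bounded_auts_of_index_le (G : topologicalType) mul inv (one : G) B V K :
  compact_open_subgroup mul inv one V ->
  (forall b b' m, B b -> B b' ->
     Defs.index mul inv (b @` V) (b @` V `&` b' @` V) m -> (m <= K)%N) ->
  bounded_auts mul inv one B.
Proof.
move=> cV le_K; exists V; split => //; exists (Rpower.ln (INR (K * K))).
move=> b b' _ Bb Bb' [m [n [im idn ->]]].
by apply: ln_INR_le; apply: leq_mul; [exact: (le_K b b') | exact: (le_K b' b)].
Qed.

Section FlatGroup.
Variables (G : topologicalType) (mul : G -> G -> G) (inv : G -> G) (one : G).
Variables (H : set (G -> G)) (O : set G).
Hypothesis Hg : is_group mul inv one.
Hypothesis HH : is_group_of_automorphisms mul H.
Hypothesis cO : compact_open_subgroup mul inv one O.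
Hypothesis O_tidy : forall phi, H phi ->
  exists n, Defs.index mul inv (phi @` O) (phi @` O `&` O) n /\ is_scale mul inv one phi n.

Lemma inverse_in_aut_group psi psi' :
  H psi -> cancel psi psi' -> cancel psi' psi -> H psi'.
Proof.
case: HH => _ _ _ Hinv Hpsi psiK psiK'.
have [q [Hq qK _]] := Hinv _ Hpsi.
suff -> : psi' = q by [].
by apply: boolp.funext => x; rewrite -[in RHS](psiK' x) qK.
Qed.

Lemma conj_image_coset_cover alpha psi psi' n :
  H alpha -> Defs.index mul inv (alpha @` O) (alpha @` O `&` O) n ->
  H psi -> cancel psi psi' -> cancel psi' psi ->
  coset_cover mul inv ((psi \o alpha \o psi') @` O) O n.
Proof.
move=> Halpha idx Hpsi psiK psiK'.
have [Haut _ Hcomp _] := HH.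
have aut_psi := Haut _ Hpsi; have [hpsi _ _] := aut_psi.
have Hchi : H (psi \o alpha \o psi').
  exact: Hcomp (Hcomp _ _ Hpsi Halpha) (inverse_in_aut_group Hpsi psiK psiK').
have [s [idx_s [_ s_min]]] := O_tidy Hchi.
apply: coset_cover_le (index_coset_cover one idx_s) _.
apply: (s_min (psi @` O)); first exact: compact_open_subgroup_image.
have chi_psiO : (psi \o alpha \o psi') @` (psi @` O) = psi @` (alpha @` O).
  apply/seteqP; split => [_ [_ [y Oy <-] <-]|_ [_ [y Oy <-] <-]].
    by exists (alpha y); [exists y | rewrite /= psiK].
  by exists (psi y); [exists y | rewrite /= psiK].
have psiI : psi @` (alpha @` O) `&` psi @` O = psi @` (alpha @` O `&` O).
  apply/seteqP; split => [x [[a Aa <-] [b Ob eb]]|_ [a [Aa Oa] <-]]; last by split; exists a.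
  by exists a => //; split => //; rewrite -(can_inj psiK eb).
by rewrite chi_psiO psiI; exact: (index_image Hg hpsi (can_inj psiK) idx).
Qed.

Lemma conj_class_index_le phi phi' n1 n2 :
  H phi -> cancel phi phi' -> cancel phi' phi ->
  Defs.index mul inv (phi @` O) (phi @` O `&` O) n1 ->
  Defs.index mul inv (phi' @` O) (phi' @` O `&` O) n2 ->
  forall b b' m, conj_class H phi b -> conj_class H phi b' ->
    Defs.index mul inv (b @` O) (b @` O `&` b' @` O) m -> (m <= n1 * n2)%N.
Proof.
move=> Hphi phiK phiK' idx1 idx2 b b' m.
move=> [psi [psi' [Hpsi psiK psiK' ->]]] [rho [rho' [Hrho rhoK rhoK' ->]]] idx.
have [Haut _ _ _] := HH; have [sO _ _] := cO.
have hom_of chi : H chi -> group_hom mul chi by case/Haut.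
have Hpsi' := inverse_in_aut_group Hpsi psiK psiK'.
have Hrho' := inverse_in_aut_group Hrho rhoK rhoK'.
have Hphi' := inverse_in_aut_group Hphi phiK phiK'.
have hom_conj chi chi' chi'' : H chi -> H chi' -> H chi'' ->
    group_hom mul (chi \o chi' \o chi'').
  by move=> Hc Hc' Hc''; apply: group_hom_comp; [apply: group_hom_comp|]; exact: hom_of.
apply: (index_le_coset_cover Hg _ _ idx).
- exact: (subgroup_image Hg (hom_conj _ _ _ Hpsi Hphi Hpsi') sO).
- exact: (subgroup_image Hg (hom_conj _ _ _ Hrho Hphi Hrho') sO).
apply: (coset_cover_trans Hg (conj_image_coset_cover Hphi idx1 Hpsi psiK psiK')).
apply: (@coset_cover_preimage _ _ _ _ Hg _ (rho \o phi' \o rho')).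
- exact: hom_conj.
- by move=> a /=; rewrite rhoK phiK' rhoK'.
- exact: (conj_image_coset_cover Hphi' idx2 Hrho rhoK rhoK').
Qed.

End FlatGroup.

Theorem proposition2 (G : topologicalType) (mul : G -> G -> G) (inv : G -> G)
    (one : G) (H : set (G -> G)) :
  is_tdlc_group mul inv one ->
  is_group_of_automorphisms mul H ->
  flat mul inv one H ->
  H = FCd mul inv one H.
Proof.
move=> [[Hg _ _] _ _ _] HH [] O [cO O_tidy].
apply/seteqP; split => [phi Hphi | phi []//]; split => //.
have [_ _ _ Hinv] := HH.
have [phi' [Hphi' phiK phiK']] := Hinv _ Hphi.
have [n1 [idx1 _]] := O_tidy _ Hphi.
have [n2 [idx2 _]] := O_tidy _ Hphi'.
apply: (bounded_auts_of_index_le cO).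
exact: (conj_class_index_le Hg HH cO O_tidy Hphi phiK phiK' idx1 idx2).
Qed.
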